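(* Let $(G,P)$ be an instance of Edge Disjoint Paths in which every vertex occurs in at most one pair of $P$. Let $X\subseteq E(G)$ be a feedback edge set of $G$ and let $Y$ be the set of vertices incident to at least one edge of $X$. Let $L$ be a connected component of $G-Y$ such that there is exactly one edge $\{\ell,y\}$ of $G$ with $\ell\in V(L)$ and $y\in Y$. Then: (a) if $L$ contains no unmatched terminal and $(L,P_L)$ is a YES-instance of EDP, then $(G,P)$ is a YES-instance if and only if $(G-V(L),\,P\setminus P_L)$ is a YES-instance; (b) if $L$ contains exactly one unmatched terminal $s$ (with $\{s,t\}\in P$, $t\notin V(L)$) and $(L,P_L\cup\{\{s,\ell\}\})$ is a YES-instance of EDP (where the pair $\{s,\ell\}$ is omitted if $s=\ell$), then $(G,P)$ is a YES-instance if and only if $(G',P\setminus P_L)$ is a YES-instance, where $G'$ is obtained from $G-V(L)$ by adding the vertex $s$ and the edge $\{y,s\}$; (c) in all other cases (i.e., $L$ contains at least two unmatched terminals, or $L$ contains no unmatched terminal and $(L,P_L)$ is a NO-instance, or $L$ contains exactly one unmatched terminal $s$ and $(L,P_L\cup\{\{s,\ell\}\})$ is a NO-instance), $(G,P)$ is a NO-instance.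
   Context: Edge Disjoint Paths (EDP): given an undirected graph $G$ and a set $P$ of terminal pairs (2-element subsets of $V(G)$), decide whether there exist pairwise edge-disjoint paths in $G$, one for each pair $\{s,t\}\in P$, connecting $s$ and $t$. A feedback edge set of $G$ is a set $X\subseteq E(G)$ such that $G-X$ is a forest. For a subgraph $H$ of $G$, $P_H\subseteq P$ is the set of pairs with both endpoints in $V(H)$, and $H$ contains an unmatched terminal $s$ if $\{s,t\}\in P$ with $s\in V(H)$ and $t\notin V(H)$. *)

(* Graphs: vertex set V : {set T} over a finType T,
   edge set E : {set {set T}} (each edge a 2-element subset of V). *)
From mathcomp Require Import all_boot.
Set Implicit Arguments. Unset Strict Implicit. Unset Printing Implicit Defensive.

Section EDP.
Variable T : finType.

Definition wf_graph (V : {set T}) (E : {set {set T}}) : Prop :=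
  forall e, e \in E -> #|e| = 2 /\ e \subset V.
Definition wf_pairs (V : {set T}) (P : {set {set T}}) : Prop :=
  forall p, p \in P -> #|p| = 2 /\ p \subset V.

Definition adj (E : {set {set T}}) : rel T := fun u v => [set u; v] \in E.

(* a path given by its first vertex and the remaining vertices *)
Definition is_path (V : {set T}) (E : {set {set T}}) (w : T * seq T) : bool :=
  [&& path (adj E) w.1 w.2, uniq (w.1 :: w.2) & all (fun v => v \in V) (w.1 :: w.2)].
Definition ends (w : T * seq T) : {set T} := [set w.1; last w.1 w.2].
Definition pedges (w : T * seq T) : {set {set T}} :=
  [set e | e \in [seq [set a.1; a.2] | a <- zip (w.1 :: w.2) w.2]].

Definition EDP (V : {set T}) (E : {set {set T}}) (P : {set {set T}}) : Prop :=
  exists f : {set T} -> T * seq T,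
    (forall p, p \in P -> is_path V E (f p) /\ ends (f p) = p) /\
    (forall p q, p \in P -> q \in P -> p != q -> [disjoint pedges (f p) & pedges (f q)]).

(* forest: no cycle (on at least 3 distinct vertices) *)
Definition forest (V : {set T}) (E : {set {set T}}) : Prop :=
  ~ exists (x : T) (s : seq T),
      [/\ 2 <= size s, is_path V E (x, s) & adj E (last x s) x].

Definition feedback_edge_set (V : {set T}) (E X : {set {set T}}) : Prop :=
  X \subset E /\ forest V (E :\: X).

Definition incident (X : {set {set T}}) : {set T} := \bigcup_(e in X) e.

Definition induced (E : {set {set T}}) (S : {set T}) : {set {set T}} :=
  [set e in E | e \subset S].

Definition reach (V : {set T}) (E : {set {set T}}) (u v : T) : Prop :=
  exists s : seq T, [/\ path (adj E) u s, all (fun x => x \in V) (u :: s) & last u s = v].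

Definition component (V : {set T}) (E : {set {set T}}) (C : {set T}) : Prop :=
  exists u, u \in V /\ forall v, v \in C <-> (v \in V /\ reach V E u v).

Definition inner_pairs (P : {set {set T}}) (H : {set T}) : {set {set T}} :=
  [set p in P | p \subset H].

Definition unmatched (P : {set {set T}}) (H : {set T}) : {set T} :=
  [set s in H | [exists p in P, (s \in p) && ~~ (p \subset H)]].

Definition pairs_with (P : {set {set T}}) (H : {set T}) (s l : T) : {set {set T}} :=
  inner_pairs P H :|: (if s == l then set0 else [set [set s; l]]).

End EDP.

(* A path of G with one end in L and the other outside must cross the unique edge
   {l, y} joining L to the rest of G, and a path with both ends on one side of that
   edge stays on that side. Hence, in a solution, a pair inside L is routed inside L,
   a pair outside L is routed in G - V(L), and every pair leaving L uses {l, y}; since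
   the paths are edge-disjoint, at most one terminal of L is unmatched, and its path
   splits into a path to l inside L followed by a path from y outside L. In G' this
   outer part, prefixed with the pendant edge {s, y}, replaces the whole path.
   Conversely, solutions of the two sides live on disjoint vertex sets, so they glue
   into a solution of (G, P), the two halves of the leaving path being joined through
   {l, y}. The feedback edge set only serves to place y outside L. *)

From mathcomp Require Import all_boot.
Set Implicit Arguments. Unset Strict Implicit. Unset Printing Implicit Defensive.

Section SetFacts.
Variable U : finType.
Implicit Types A B C : {set U}.

Lemma disjoint_set0l A : [disjoint set0 & A].
Proof. by rewrite -setI_eq0 set0I. Qed.

Lemma disjoint_setUl A B C : [disjoint A :|: B & C] = [disjoint A & C] && [disjoint B & C].
Proof. by rewrite -!setI_eq0 setIUl setU_eq0. Qed.

Lemma card2_set2 A a b : #|A| = 2 -> a \in A -> b \in A -> a != b -> A = [set a; b].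
Proof.
move=> A2 aA bA ab; apply/esym/eqP; rewrite eqEcard cards2 ab A2 andbT.
by rewrite subUset !sub1set aA bA.
Qed.

End SetFacts.

Section Paths.
Variable T : finType.
Implicit Types (V W A B : {set T}) (E F : {set {set T}}) (x z : T) (s : seq T).

Lemma adjC E u v : adj E u v = adj E v u.
Proof. by rewrite /adj setUC. Qed.

Lemma pedges_nil x : pedges (x, [::]) = set0.
Proof. by apply/setP=> e; rewrite !inE. Qed.

Lemma pedges_cons x z s : pedges (x, z :: s) = [set x; z] |: pedges (z, s).
Proof. by apply/setP=> e; rewrite /pedges !inE. Qed.

Lemma pedges_cat x s1 z s2 :
  pedges (x, s1 ++ z :: s2) = pedges (x, s1) :|: ([set last x s1; z] |: pedges (z, s2)).
Proof.
elim: s1 x => [|w s1 IH] x /=; first by rewrite pedges_nil set0U pedges_cons.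
by rewrite !pedges_cons IH setUA.
Qed.

Lemma rev_belast_cons x s : last x s :: rev (belast x s) = rev (x :: s).
Proof. by rewrite [in RHS]lastI rev_rcons. Qed.

Lemma last_rev_belast x s : last (last x s) (rev (belast x s)) = x.
Proof.
rewrite -[LHS]/(last x (last x s :: rev (belast x s))).
by rewrite rev_belast_cons rev_cons last_rcons.
Qed.

Lemma pedges_rev x s : pedges (last x s, rev (belast x s)) = pedges (x, s).
Proof.
elim: s x => [|z s IH] x //=.
rewrite rev_cons -cats1 pedges_cat pedges_nil setU0 last_rev_belast IH pedges_cons.
by rewrite setUC [[set z; x]]setUC.
Qed.

Lemma last_of_ends x b s :
  ends (x, s) = [set x; b] -> x != b -> last x s = b.
Proof.
move=> e xb; have : b \in [set x; last x s] by rewrite [_ |: _]e set22.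
by case/set2P=> // bx; rewrite bx eqxx in xb.
Qed.

Lemma mem_pedges x s e : e \in pedges (x, s) ->
  exists u v, [/\ e = [set u; v], u \in x :: s & v \in x :: s].
Proof.
elim: s x => [|z s IH] x; first by rewrite pedges_nil inE.
rewrite pedges_cons => /setU1P[->|/IH[u [v [-> us vs]]]].
  by exists x, z; rewrite !in_cons !eqxx orbT.
by exists u, v; rewrite in_cons us in_cons vs !orbT.
Qed.

Lemma is_path_pedges_sub V E w e : is_path V E w -> e \in pedges w -> e \subset V.
Proof.
case: w => x s /and3P[_ _ /allP sV] /mem_pedges[u [v [-> us vs]]].
by rewrite subUset !sub1set !sV.
Qed.

Lemma notin_pedges V E w (e : {set T}) : is_path V E w -> ~~ (e \subset V) -> e \notin pedges w.
Proof. by move=> pw; apply: contra => /(is_path_pedges_sub pw). Qed.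

Lemma disjoint_pedges A B E F w w' :
  [disjoint A & B] -> is_path A E w -> is_path B F w' ->
  [disjoint pedges w & pedges w'].
Proof.
move=> AB pw pw'; apply/pred0P=> e /=; apply/negbTE/andP=> [[ew ew']].
case: w pw ew => x s pw /[dup] ew /mem_pedges[u [v [eu _ _]]].
have ue : u \in e by rewrite eu set21.
have uB := subsetP (is_path_pedges_sub pw' ew') u ue.
by rewrite (disjointFr AB (subsetP (is_path_pedges_sub pw ew) u ue)) in uB.
Qed.

Lemma is_path_rev V E x s :
  is_path V E (x, s) -> is_path V E (last x s, rev (belast x s)).
Proof.
case/and3P=> p u a; move: p => /= p.
change [&& path (adj E) (last x s) (rev (belast x s)),
  uniq (last x s :: rev (belast x s)) & all (fun v => v \in V) (last x s :: rev (belast x s))].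
rewrite rev_belast_cons rev_uniq all_rev u a rev_path andbT.
by rewrite (eq_path (e' := adj E)) ?p // => v w; exact: adjC.
Qed.

Lemma reorient V E w a : is_path V E w -> a \in ends w ->
  exists s, [/\ is_path V E (a, s), ends (a, s) = ends w & pedges (a, s) = pedges w].
Proof.
case: w => x s pw /set2P[->|->]; first by exists s.
exists (rev (belast x s)); split; [exact: is_path_rev | | exact: pedges_rev].
by rewrite /ends /= last_rev_belast setUC.
Qed.

Lemma adj_induced E A : {in A &, forall u v, adj E u v -> adj (induced E A) u v}.
Proof. by move=> u v uA vA; rewrite /adj inE => ->; rewrite subUset !sub1set uA vA. Qed.

Lemma induced_sub E A : induced E A \subset E.
Proof. by apply/subsetP=> e; rewrite inE => /andP[]. Qed.

Lemma is_path_mono V W E F w :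
  V \subset W -> E \subset F -> is_path V E w -> is_path W F w.
Proof.
move=> VW EF; case: w => x s /and3P[p u a]; apply/and3P; split=> //.
  by apply: sub_path p => v w /(subsetP EF).
by apply/allP=> v /(allP a)/(subsetP VW).
Qed.

Lemma is_path_restrict V W E F x s :
  is_path V E (x, s) -> all (fun v => v \in W) (x :: s) ->
  {in W &, forall u v, adj E u v -> adj F u v} -> is_path W F (x, s).
Proof.
case/and3P=> p u _ aW EF; apply/and3P; split=> //; move: p => /=.
elim: s x aW {u} => [|z s IH] x //= /and3P[xW zW sW] /andP[xz p].
by rewrite EF // IH //= zW.
Qed.

Lemma is_path_induced V W E x s :
  is_path V E (x, s) -> all (fun v => v \in W) (x :: s) ->
  is_path (V :&: W) (induced E (V :&: W)) (x, s).
Proof.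
move=> pw aW; apply: is_path_restrict (pw) _ (@adj_induced E _).
case/and3P: pw => _ _ aV; apply/allP=> v vs; by rewrite inE (allP aV) ?(allP aW).
Qed.

Lemma is_path_split V E x s1 z s2 :
  is_path V E (x, s1 ++ z :: s2) -> is_path V E (x, s1) /\ is_path V E (z, s2).
Proof.
case/and3P=> + u a; rewrite /= cat_path => /andP[p1 /= /andP[_ p2]].
move: u; rewrite -[uniq _]/(uniq ((x :: s1) ++ z :: s2)) cat_uniq => /and3P[u1 _ u2].
move: a; rewrite -[all _ _]/(all (fun v => v \in V) ((x :: s1) ++ z :: s2)) all_cat.
by case/andP=> a1 a2; split; apply/and3P.
Qed.

Lemma is_path_join A B E x s1 z s2 : [disjoint A & B] ->
  is_path A E (x, s1) -> is_path B E (z, s2) -> adj E (last x s1) z ->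
  is_path (A :|: B) E (x, s1 ++ z :: s2).
Proof.
move=> AB /and3P[p1 u1 a1] /and3P[p2 u2 a2] e; apply/and3P; split.
- by rewrite /= cat_path p1 /= e.
- change (uniq ((x :: s1) ++ z :: s2)); rewrite cat_uniq u1 u2 andbT.
  apply/hasPn=> v /(allP a2) vB.
  by apply/negP=> /(allP a1) vA; rewrite (disjointFr AB vA) in vB.
- change (all (fun v => v \in A :|: B) ((x :: s1) ++ z :: s2)).
  rewrite all_cat; apply/andP; split; apply/allP=> v vs; rewrite inE.
    by rewrite (allP a1).
  by rewrite (allP a2) ?orbT.
Qed.

End Paths.

Section Bridges.
Variable T : finType.
Implicit Types (A : {set T}) (E : {set {set T}}) (a b x z : T) (s : seq T).

Definition bridge E A a b :=
  forall u v, adj E u v -> u \in A -> v \notin A -> u = a /\ v = b.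

Lemma bridgeC E A a b : bridge E A a b -> bridge E (~: A) b a.
Proof.
move=> br u v uv; rewrite !inE negbK => uA vA; rewrite adjC in uv.
by have [-> ->] := br v u uv vA uA.
Qed.

Lemma bridge_stay E A a b x s : bridge E A a b ->
  path (adj E) x s -> x \in A -> b \notin s -> all (fun v => v \in A) (x :: s).
Proof.
move=> br; elim: s x => [|z s IH] x /=; first by rewrite andbT.
case/andP=> xz p xA; rewrite in_cons negb_or => /andP[bz bs]; rewrite xA /=.
have zA : z \in A by apply: contraNT bz => zA; have [_ <-] := br x z xz xA zA.
exact: IH.
Qed.

Lemma bridge_cross E A a b x z s : bridge E A a b ->
  path (adj E) x (z :: s) -> uniq (x :: z :: s) -> x \in A -> z \notin A ->
  [/\ x = a, z = b & all (fun v => v \in ~: A) (z :: s)].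
Proof.
move=> br /andP[xz p] /andP[xzs _] xA zA; have [xa zb] := br x z xz xA zA.
split=> //; apply: bridge_stay (bridgeC br) p _ _; first by rewrite inE.
by apply: contra xzs; rewrite xa in_cons orbC => ->.
Qed.

Lemma bridge_split E A a b x s : bridge E A a b ->
  path (adj E) x s -> uniq (x :: s) -> x \in A -> last x s \notin A ->
  exists s1 s2, [/\ s = s1 ++ b :: s2, last x s1 = a,
    all (fun v => v \in A) (x :: s1) & all (fun v => v \in ~: A) (b :: s2)].
Proof.
move=> br; elim: s x => [|z s IH] x p u xA; first by rewrite /= xA.
case: (boolP (z \in A)) => zA.
  move: p u => /andP[xz p] /andP[_ u] /(IH z p u zA)[s1 [s2 [-> l1 a1 a2]]].
  by exists (z :: s1), s2; rewrite /= xA.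
have [xa zb out] := bridge_cross br p u xA zA.
by exists [::], s; rewrite -zb /= xA xa.
Qed.

Lemma bridge_inside E A a b x s : bridge E A a b ->
  path (adj E) x s -> uniq (x :: s) -> x \in A -> last x s \in A ->
  all (fun v => v \in A) (x :: s).
Proof.
move=> br; elim: s x => [|z s IH] x p u xA; first by rewrite /= xA.
case: (boolP (z \in A)) => zA.
  by move: p u => /andP[xz p] /andP[_ u] /(IH z p u zA) /= ->; rewrite xA.
have [_ _ /allP out] := bridge_cross br p u xA zA.
by have := out _ (mem_last z s); rewrite inE => /negP.
Qed.

Lemma bridge_is_path V E A a b w : bridge E A a b -> is_path V E w ->
  ends w \subset A -> is_path (V :&: A) (induced E (V :&: A)) w.
Proof.
case: w => x s br pw; rewrite /ends /= subUset !sub1set => /andP[xA lA].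
case/and3P: (pw) => p u _; exact: is_path_induced pw (bridge_inside br p u xA lA).
Qed.

Lemma bridge_split_path V E A a b w x : bridge E A a b -> is_path V E w ->
  x \in ends w -> x \in A -> ~~ (ends w \subset A) ->
  exists s1 s2, [/\ is_path (V :&: A) (induced E (V :&: A)) (x, s1), last x s1 = a,
    is_path (V :\: A) (induced E (V :\: A)) (b, s2), ends w = [set x; last b s2] &
    pedges w = pedges (x, s1) :|: ([set a; b] |: pedges (b, s2))].
Proof.
move=> br pw xw xA; have [s [px <- <-]] := reorient pw xw => wA.
have lA : last x s \notin A by apply: contra wA; rewrite /ends /= subUset !sub1set xA.
case/and3P: (px) => p u _.
have [s1 [s2 [es l1 a1 a2]]] := bridge_split (s := s) br p u xA lA.
rewrite es in px *; have [p1 p2] := is_path_split px.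
exists s1, s2; split => //.
- exact: is_path_induced p1 a1.
- by rewrite setDE; apply: is_path_induced p2 a2.
- by rewrite /ends /= last_cat.
- by rewrite pedges_cat l1.
Qed.

End Bridges.

Section Solutions.
Variable T : finType.
Implicit Types (V W H : {set T}) (E F P Q : {set {set T}}) (f g : {set T} -> T * seq T).

Definition solution V E P f :=
  (forall p, p \in P -> is_path V E (f p) /\ ends (f p) = p) /\
  (forall p q, p \in P -> q \in P -> p != q -> [disjoint pedges (f p) & pedges (f q)]).

Lemma solution_path V E P f p : solution V E P f -> p \in P -> is_path V E (f p).
Proof. by case=> pf _ /pf[]. Qed.

Lemma solution_ends V E P f p : solution V E P f -> p \in P -> ends (f p) = p.
Proof. by case=> pf _ /pf[]. Qed.

Lemma solution_disjoint V E P f p q : solution V E P f -> p \in P -> q \in P -> p != q ->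
  [disjoint pedges (f p) & pedges (f q)].
Proof. by case=> _; apply. Qed.

Lemma solution_subset V E P Q f : Q \subset P -> solution V E P f -> solution V E Q f.
Proof.
by move=> /subsetP QP [pf df]; split=> [p /QP|p q /QP pP /QP qP]; [apply: pf | apply: df].
Qed.

Lemma solution_mono V W E F P f :
  V \subset W -> E \subset F -> solution V E P f -> solution W F P f.
Proof.
by move=> VW EF [pf df]; split=> // p /pf[pp ep]; split=> //; apply: is_path_mono pp.
Qed.

Lemma solution_const V E P w :
  is_path V E w -> (forall p, p \in P -> ends w = p) -> solution V E P (fun=> w).
Proof.
by move=> pw ew; split=> [p /ew|p q /ew <- /ew <-]; rewrite ?eqxx.
Qed.

Lemma solution_glue V E P (C : pred {set T}) f g :
  solution V E [set p in P | C p] f -> solution V E [set p in P | ~~ C p] g ->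
  (forall p q, p \in P -> q \in P -> C p -> ~~ C q ->
     [disjoint pedges (f p) & pedges (g q)]) ->
  solution V E P (fun p => if C p then f p else g p).
Proof.
move=> [pf df] [pg dg] dfg; split=> [p pP|p q pP qP pq].
  by case: ifP => Cp; [apply: pf | apply: pg]; rewrite inE pP ?Cp.
case: ifP => Cp; case: ifP => Cq.
- by apply: df; rewrite // inE ?pP ?qP ?Cp ?Cq.
- exact: dfg (negbT Cq).
- by rewrite disjoint_sym; apply: dfg (negbT Cp).
- by apply: dg; rewrite // inE ?pP ?qP ?Cp ?Cq.
Qed.

Lemma outer_pairsE P H : P :\: inner_pairs P H = [set p in P | ~~ (p \subset H)].
Proof. by apply/setP=> p; rewrite !inE; case: (p \in P); rewrite ?andbT. Qed.

Lemma unmatchedP P H v : reflect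
  (v \in H /\ exists2 p, p \in P & (v \in p) && ~~ (p \subset H)) (v \in unmatched P H).
Proof.
rewrite inE; apply: (iffP andP) => -[vH pH]; split=> //.
  by have /exists_inP[p] := pH; exists p.
by apply/exists_inP; case: pH => p; exists p.
Qed.

End Solutions.

Record leaf_component (T : finType) (V : {set T}) (E P : {set {set T}})
    (VL : {set T}) (l y : T) : Prop := LeafComponent {
  leaf_pairs_wf : wf_pairs V P;
  leaf_pairs_uniq : forall p q v, p \in P -> q \in P -> v \in p -> v \in q -> p = q;
  leaf_bridge : bridge E VL l y;
  leaf_sub : VL \subset V;
  leaf_l : l \in VL;
  leaf_y : y \in V :\: VL;
  leaf_edge : [set l; y] \in E }.

Record leaving_pair (T : finType) (P : {set {set T}}) (VL : {set T}) (s : T)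
    (ps : {set T}) : Prop := LeavingPair {
  leaving_s : s \in VL;
  leaving_P : ps \in P;
  leaving_mem : s \in ps;
  leaving_out : ~~ (ps \subset VL) }.

Section Reduction.
Variables (T : finType) (V : {set T}) (E P : {set {set T}}) (VL : {set T}) (l y : T).
Hypothesis leafL : leaf_component V E P VL l y.

Local Notation VO := (V :\: VL).
Local Notation EL := (induced E VL).
Local Notation EO := (induced E VO).
Local Notation PL := (inner_pairs P VL).

Let P_uniq := leaf_pairs_uniq leafL.
Let VL_bridge := leaf_bridge leafL.
Let VL_sub := leaf_sub leafL.

Let y_VL : y \notin VL.
Proof. by have := leaf_y leafL; rewrite inE => /andP[]. Qed.

Let l_VO : l \notin VO.
Proof. by rewrite inE (leaf_l leafL). Qed.

Let VL_VO : [disjoint VL & VO].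
Proof. by rewrite -setI_eq0 setIDA (setIidPl VL_sub) setDv. Qed.

Lemma inner_path w : is_path V E w -> ends w \subset VL -> is_path VL EL w.
Proof. by move=> pw wL; rewrite -(setIidPr VL_sub); apply: bridge_is_path VL_bridge pw wL. Qed.

Lemma outer_path w : is_path V E w -> ends w \subset ~: VL -> is_path VO EO w.
Proof. by move=> pw wO; rewrite setDE; apply: bridge_is_path (bridgeC VL_bridge) pw wO. Qed.

Lemma solution_inner f : solution V E P f -> solution VL EL PL f.
Proof.
move=> [pf df]; split=> [p|p q]; rewrite !inE.
  by case/andP=> pP pL; have [pw ep] := pf p pP; split=> //; apply: inner_path; rewrite ?ep.
by move=> /andP[pP _] /andP[qP _]; apply: df.
Qed.

Lemma EDP_inner : EDP V E P -> EDP VL EL PL.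
Proof. by move=> [f /solution_inner]; exists f. Qed.

Lemma bridge_in_leaving_path f p v : solution V E P f -> p \in P ->
  v \in p -> v \in VL -> ~~ (p \subset VL) -> [set l; y] \in pedges (f p).
Proof.
move=> solf pP vp vL pL; rewrite -(solution_ends solf pP) in vp pL.
have [s1 [s2 [_ _ _ _ ->]]] := bridge_split_path VL_bridge (solution_path solf pP) vp vL pL.
by rewrite in_setU in_setU1 eqxx orbT.
Qed.

Lemma EDP_unmatched_gt1 : 1 < #|unmatched P VL| -> ~ EDP V E P.
Proof.
case/card_gt1P=> u [v [/unmatchedP[uL [p pP /andP[up pL]]]]].
case/unmatchedP=> vL [q qP /andP[vq qL]] uv [f /[dup] solf [_ df]].
have pq : p != q.
  apply: contra pL => /eqP pq; rewrite (card2_set2 (leaf_pairs_wf leafL pP).1 up _ uv) ?pq //.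
  by rewrite subUset !sub1set uL vL.
have := disjointFr (df p q pP qP pq) (bridge_in_leaving_path solf pP up uL pL).
by rewrite (bridge_in_leaving_path solf qP vq vL qL).
Qed.

Lemma EDP_outer_matched : unmatched P VL = set0 -> EDP V E P -> EDP VO EO (P :\: PL).
Proof.
move=> U0 [f [pf df]]; exists f; rewrite outer_pairsE; split=> [p|p q]; rewrite !inE.
  case/andP=> pP pL; have [pw ep] := pf p pP; split=> //; apply: outer_path pw _.
  rewrite ep; apply/subsetP=> v vp; rewrite inE; apply/negP=> vL.
  have : v \in unmatched P VL by apply/unmatchedP; split=> //; exists p; rewrite ?vp.
  by rewrite U0 inE.
by move=> /andP[pP _] /andP[qP _]; apply: df.
Qed.

Lemma is_path_through_bridge x t u :
  is_path VL EL (x, t) -> last x t = l -> is_path VO EO (y, u) -> is_path V E (x, t ++ y :: u).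
Proof.
move=> pt lt pu; apply: (is_path_mono (V := VL :|: VO) _ (subxx E)).
  by rewrite subUset VL_sub subsetDl.
apply: is_path_join VL_VO _ _ _.
- exact: is_path_mono (subxx _) (induced_sub _ _) pt.
- exact: is_path_mono (subxx _) (induced_sub _ _) pu.
- by rewrite lt; exact: leaf_edge leafL.
Qed.

Lemma solution_join_sides (Q : {set {set T}}) (f g : {set T} -> T * seq T) :
  solution VL EL [set p in Q | p \subset VL] f ->
  solution VO EO [set p in Q | ~~ (p \subset VL)] g ->
  solution V E Q (fun p => if p \subset VL then f p else g p).
Proof.
move=> solf solg; apply: solution_glue.
- exact: solution_mono VL_sub (induced_sub _ _) solf.
- exact: solution_mono (subsetDl _ _) (induced_sub _ _) solg.
move=> p q pQ qQ pL qL; have pQL : p \in [set p in Q | p \subset VL] by rewrite inE pQ pL.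
have qQO : q \in [set p in Q | ~~ (p \subset VL)] by rewrite inE qQ qL.
exact: disjoint_pedges VL_VO (solution_path solf pQL) (solution_path solg qQO).
Qed.

Lemma EDP_join_matched : EDP VL EL PL -> EDP VO EO (P :\: PL) -> EDP V E P.
Proof.
move=> [f solf] [g]; rewrite outer_pairsE => solg.
by exists (fun p : {set T} => if p \subset VL then f p else g p); apply: solution_join_sides.
Qed.

Section Pendant.
Variables (s : T) (ps : {set T}).
Hypothesis leaving : leaving_pair P VL s ps.

Local Notation VS := (VO :|: [set s]).
Local Notation ES := (EO :|: [set [set y; s]]).

Let s_VL := leaving_s leaving.
Let ps_P := leaving_P leaving.
Let ps_L := leaving_out leaving.

Let s_VO : s \notin VO.
Proof. by rewrite inE s_VL. Qed.

Lemma leaving_pair_uniq p : p \in P -> s \in p -> p = ps.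
Proof. by move=> pP sp; apply: P_uniq pP ps_P sp (leaving_mem leaving). Qed.

Lemma link_not_inner : [set s; l] \notin PL.
Proof.
rewrite inE; apply/negP=> /andP[slP slL].
by move: ps_L; rewrite -(leaving_pair_uniq slP (set21 s l)) slL.
Qed.

Lemma EDP_inner_link_path : EDP V E P -> EDP VL EL (pairs_with P VL s l).
Proof.
move=> [f /[dup] solf [pf df]]; have solL := solution_inner solf.
rewrite /pairs_with; case: (eqVneq s l) => [_|sl]; first by exists f; rewrite setU0.
have [pw ep] := pf ps ps_P.
have sw : s \in ends (f ps) by rewrite ep (leaving_mem leaving).
have wL : ~~ (ends (f ps) \subset VL) by rewrite ep.
have [t [u [pt lt _ _ pe]]] := bridge_split_path VL_bridge pw sw s_VL wL.
rewrite (setIidPr VL_sub) in pt.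
exists (fun p => if p == [set s; l] then (s, t) else f p); apply: solution_glue.
- by apply: (solution_const pt) => p; rewrite !inE => /andP[_ /eqP->]; rewrite /ends /= lt.
- apply: solution_subset solL; apply/subsetP=> p; rewrite !inE.
  by case/andP=> /orP[|/eqP->]; rewrite ?eqxx.
move=> p q _; rewrite in_setU in_set1 => + _ qsl; rewrite (negbTE qsl) orbF inE.
case/andP=> qP qL; apply: disjointWl (df ps q ps_P qP _); first by rewrite pe subsetUl.
by apply: contraNneq ps_L => ->.
Qed.

Lemma pendant_bridge : bridge ES (~: [set s]) y s.
Proof.
move=> u v uv; rewrite !inE negbK => us /eqP vs; subst v; split=> //.
move: uv; rewrite /adj in_setU in_set1 => /orP[|/eqP e].
  by rewrite inE subUset !sub1set (negbTE s_VO) !andbF.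
have : u \in [set y; s] by rewrite -e set21.
by case/set2P=> // us'; rewrite us' eqxx in us.
Qed.

Lemma pendant_adj : {in VO &, forall u v, adj ES u v -> adj EO u v}.
Proof.
move=> u v uO vO; rewrite /adj in_setU in_set1 => /orP[//|/eqP e].
have : s \in [set u; v] by rewrite e set22.
by case/set2P=> su; move: s_VO; rewrite su ?uO ?vO.
Qed.

Lemma pendant_path w : is_path VS ES w -> s \notin ends w -> is_path VO EO w.
Proof.
case: w => x r pw; rewrite /ends /= !inE negb_or => /andP[sx sr].
case/and3P: (pw) => p u a.
have xs : x \in ~: [set s] by rewrite !inE eq_sym.
have rs : last x r \in ~: [set s] by rewrite !inE eq_sym.
have /allP avoid := bridge_inside pendant_bridge p u xs rs.
apply: is_path_restrict pw _ pendant_adj; apply/allP=> v vr.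
by move: (allP a v vr) (avoid v vr); rewrite in_setU in_setC !in_set1 => /orP[|->].
Qed.

Lemma pendant_path_from w : is_path VS ES w -> s \in ends w -> #|ends w| = 2 ->
  exists t, [/\ is_path VO EO (y, t), ends w = [set s; last y t] &
    pedges (y, t) \subset pedges w].
Proof.
move=> pw sw; have [[|z t] [pst <- <-]] := reorient pw sw.
  by rewrite /ends /= setUid cards1.
move=> _; have [_ pzt] := is_path_split (s1 := [::]) pst.
case/and3P: pst => /andP[sz _] /andP[szt _] _.
have zy : z = y.
  rewrite adjC in sz; apply: (proj1 (pendant_bridge sz _ _)); last by rewrite !inE eqxx.
  by rewrite !inE; apply: contraNneq szt => ->; rewrite mem_head.
subst z; exists t; split=> //; last by rewrite pedges_cons subsetUr.
apply: pendant_path pzt _; rewrite /ends /= !inE negb_or.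
by apply/andP; split; apply: contraNneq szt => ->; rewrite ?mem_head ?mem_last.
Qed.

Lemma others_outside : unmatched P VL = [set s] ->
  forall p, p \in P -> ~~ (p \subset VL) -> p != ps -> p \subset ~: VL.
Proof.
move=> U1 p pP pL pps; apply/subsetP=> v vp; rewrite inE; apply/negP=> vL.
have : v \in unmatched P VL by apply/unmatchedP; split=> //; exists p; rewrite ?vp.
rewrite U1 inE => /eqP vs; subst v.
by rewrite (leaving_pair_uniq pP vp) eqxx in pps.
Qed.

Lemma solution_outer_others f : unmatched P VL = [set s] -> solution V E P f ->
  solution VO EO [set p in [set p in P | ~~ (p \subset VL)] | p != ps] f.
Proof.
move=> U1 [pf df]; split=> [p|p q]; rewrite !inE.
  case/andP=> /andP[pP pL] pps; have [pw ep] := pf p pP; split=> //.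
  by apply: outer_path pw _; rewrite ep; apply: others_outside.
by move=> /andP[/andP[pP _] _] /andP[/andP[qP _] _]; apply: df.
Qed.

Lemma EDP_outer_pendant : unmatched P VL = [set s] -> EDP V E P -> EDP VS ES (P :\: PL).
Proof.
move=> U1 [f /[dup] solf [pf df]]; have [pw ep] := pf ps ps_P.
have sw : s \in ends (f ps) by rewrite ep (leaving_mem leaving).
have wL : ~~ (ends (f ps) \subset VL) by rewrite ep.
have [t [u [_ _ pu eu pe]]] := bridge_split_path VL_bridge pw sw s_VL wL.
have pSu : is_path VS ES (s, y :: u).
  rewrite [VS]setUC; apply: (@is_path_join _ [set s] _ _ _ [::]).
  - by rewrite disjoints1.
  - by rewrite /is_path /= set11.
  - exact: is_path_mono (subxx _) (subsetUl _ _) pu.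
  - by rewrite /adj in_setU in_set1 setUC eqxx orbT.
have solO := solution_outer_others U1 solf.
exists (fun p => if p == ps then (s, y :: u) else f p); rewrite outer_pairsE.
apply: solution_glue.
- by apply: (solution_const pSu) => p; rewrite !inE => /andP[_ /eqP->]; rewrite -ep eu.
- exact: solution_mono (subsetUl _ _) (subsetUl _ _) solO.
move=> p q _ qO _ qps; have qO' : q \in [set p in [set p in P | ~~ (p \subset VL)] | p != ps].
  by rewrite inE qO qps.
rewrite pedges_cons disjoint_setUl disjoints1; apply/andP; split.
  by apply: notin_pedges (solution_path solO qO') _; rewrite subUset !sub1set (negbTE s_VO).
apply: disjointWl (df ps q ps_P _ _); first by rewrite pe setUA subsetUr.
  by move: qO; rewrite inE => /andP[].
by rewrite eq_sym.
Qed.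

Lemma inner_link_path fL : solution VL EL (pairs_with P VL s l) fL ->
  exists t, [/\ is_path VL EL (s, t), last s t = l &
    forall p, p \in PL -> [disjoint pedges (s, t) & pedges (fL p)]].
Proof.
move=> [pf df]; case: (eqVneq s l) => [sl|sl].
  exists [::]; split=> // [|p _]; last by rewrite pedges_nil disjoint_set0l.
  by rewrite /is_path /= s_VL.
have slP : [set s; l] \in pairs_with P VL s l.
  by rewrite /pairs_with (negbTE sl) in_setU in_set1 eqxx orbT.
have [pw ew] := pf _ slP; have sw : s \in ends (fL [set s; l]) by rewrite ew set21.
have [t [pt et e't]] := reorient pw sw.
exists t; split=> //; first by apply: last_of_ends sl; rewrite et ew.
move=> p pL; rewrite e't; apply: df slP _ _; first by rewrite /pairs_with in_setU pL.
by apply: contraNneq link_not_inner => ->.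
Qed.

Lemma solution_pendant_others g : solution VS ES [set p in P | ~~ (p \subset VL)] g ->
  solution VO EO [set p in [set p in P | ~~ (p \subset VL)] | p != ps] g.
Proof.
move=> [pg dg]; split=> [p /setIdP[pO pps] | p q /setIdP[pO _] /setIdP[qO _]].
  have [pw ep] := pg p pO; split=> //; apply: pendant_path pw _; rewrite ep.
  apply: contra pps => sp; move: pO; rewrite inE => /andP[pP _].
  by rewrite (leaving_pair_uniq pP sp).
exact: dg.
Qed.

Lemma EDP_join_pendant :
  EDP VL EL (pairs_with P VL s l) -> EDP VS ES (P :\: PL) -> EDP V E P.
Proof.
move=> [fL solL] [g]; rewrite outer_pairsE => solg.
have [t [pt lt dt]] := inner_link_path solL.
have psO : ps \in [set p in P | ~~ (p \subset VL)] by rewrite inE ps_P ps_L.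
have sw : s \in ends (g ps) by rewrite (solution_ends solg psO) (leaving_mem leaving).
have w2 : #|ends (g ps)| = 2 by rewrite (solution_ends solg psO) (leaf_pairs_wf leafL ps_P).1.
have [u [pu eu pe]] := pendant_path_from (solution_path solg psO) sw w2.
have solO := solution_pendant_others solg.
have pw := is_path_through_bridge pt lt pu.
exists (fun p => if p == ps then (s, t ++ y :: u) else if p \subset VL then fL p else g p).
apply: solution_glue.
- apply: (solution_const pw) => p; rewrite !inE => /andP[_ /eqP->].
  by rewrite -(solution_ends solg psO) eu /ends /= last_cat.
- apply: solution_join_sides.
  + apply: solution_subset solL; apply/subsetP=> p; rewrite !inE.
    by case/andP=> /andP[-> _] ->.
  + apply: solution_subset solO; apply/subsetP=> p; rewrite !inE.
    by case/andP=> /andP[-> ->] ->.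
move=> p q _ qP _ qps.
rewrite pedges_cat lt !disjoint_setUl disjoints1; case: ifP => qL.
  have qPL : q \in PL by rewrite inE qP qL.
  have pq : is_path VL EL (fL q) by apply: solution_path solL _; rewrite /pairs_with in_setU qPL.
  rewrite (dt q qPL) (notin_pedges pq) /=; last by rewrite subUset !sub1set (negbTE y_VL) andbF.
  by rewrite disjoint_sym (disjoint_pedges VL_VO pq pu).
have qO : q \in [set p in [set p in P | ~~ (p \subset VL)] | p != ps] by rewrite !inE qP qL.
have pq := solution_path solO qO.
rewrite (disjoint_pedges VL_VO pt pq) (notin_pedges pq) ?subUset ?sub1set ?(negbTE l_VO) //=.
apply: disjointWl (solution_disjoint solg psO _ _); first by rewrite pe.
  by rewrite inE qP qL.
by rewrite eq_sym.
Qed.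

End Pendant.

End Reduction.

Lemma leaving_pair_of_unmatched (T : finType) (P : {set {set T}}) VL s :
  s \in unmatched P VL -> exists ps, leaving_pair P VL s ps.
Proof. by case/unmatchedP=> sL [ps psP /andP[sps psL]]; exists ps. Qed.

Section Components.
Variables (T : finType) (V : {set T}) (E : {set {set T}}).

Lemma component_sub C : component V E C -> C \subset V.
Proof. by case=> r [_ Cr]; apply/subsetP=> v /Cr[]. Qed.

Lemma component_adj C u v :
  component V (induced E V) C -> u \in C -> v \in V -> adj E u v -> v \in C.
Proof.
case=> r [rV Cr] /Cr[uV [t [pt tV lt]]] vV uv; apply/Cr; split=> //.
exists (rcons t v); rewrite rcons_path pt lt adj_induced //= last_rcons.
by split; rewrite // all_rcons vV.
Qed.

End Components.

Lemma component_bridge (T : finType) (V : {set T}) (E X : {set {set T}}) C l y :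
  wf_graph V E -> component (V :\: incident X) (induced E (V :\: incident X)) C ->
  (forall a b, [set a; b] \in E -> a \in C -> b \in incident X -> a = l /\ b = y) ->
  bridge E C l y.
Proof.
move=> wfG comp CY a b ab aC bC; case: (boolP (b \in incident X)) => bY; first exact: CY.
have bV : b \in V by have := (wfG _ ab).2; rewrite subUset !sub1set => /andP[].
by rewrite (component_adj comp aC _ ab) ?inE ?bY in bC.
Qed.

Theorem mainTheorem8 (T : finType) (V : {set T}) (E P X : {set {set T}})
    (VL : {set T}) (l y : T) :
  wf_graph V E -> wf_pairs V P ->
  (forall p q v, p \in P -> q \in P -> v \in p -> v \in q -> p = q) ->
  feedback_edge_set V E X ->
  component (V :\: incident X) (induced E (V :\: incident X)) VL ->
  [set l; y] \in E -> l \in VL -> y \in incident X ->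
  (forall a b, [set a; b] \in E -> a \in VL -> b \in incident X -> a = l /\ b = y) ->
  let EL := induced E VL in
  let PL := inner_pairs P VL in
  let U := unmatched P VL in
  ((U = set0 -> EDP VL EL PL ->
     (EDP V E P <-> EDP (V :\: VL) (induced E (V :\: VL)) (P :\: PL))) /\
   (forall s, U = [set s] -> EDP VL EL (pairs_with P VL s l) ->
     (EDP V E P <->
      EDP ((V :\: VL) :|: [set s]) (induced E (V :\: VL) :|: [set [set y; s]]) (P :\: PL))) /\
   ((2 <= #|U| \/ (U = set0 /\ ~ EDP VL EL PL) \/
     (exists s, U = [set s] /\ ~ EDP VL EL (pairs_with P VL s l))) ->
    ~ EDP V E P)).
Proof.
move=> wfG wfP uP _ comp lyE lVL yY Hly /=.
have VL_sub : VL \subset V :\: incident X := component_sub comp.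
have leafL : leaf_component V E P VL l y.
  split=> //; first exact: component_bridge comp Hly.
    exact: subset_trans VL_sub (subsetDl _ _).
  rewrite inE (subsetP (wfG _ lyE).2 y (set22 l y)) andbT.
  by apply: contraL yY => /(subsetP VL_sub); rewrite inE => /andP[].
have leaving s : unmatched P VL = [set s] -> exists ps, leaving_pair P VL s ps.
  by move=> U1; apply: leaving_pair_of_unmatched; rewrite U1 set11.
split; [|split].
- move=> U0 HL.
  by split; [exact: (EDP_outer_matched leafL U0) | exact: (EDP_join_matched leafL HL)].
- move=> s U1 HL; have [ps lps] := leaving s U1.
  by split; [exact: (EDP_outer_pendant leafL lps U1) | exact: (EDP_join_pendant leafL lps HL)].
case=> [U2 | [[_ nL] | [s [U1 nL]]]] G; first exact: (EDP_unmatched_gt1 leafL U2 G).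
  exact/nL/(EDP_inner leafL).
have [ps lps] := leaving s U1; exact/nL/(EDP_inner_link_path leafL lps).
Qed.
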